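(* Let $N, K \ge 1$ be integers and let $\lambda^-, \lambda^+ \in [-1,1]$. Let $W \in \mathbb{R}^{N\times N}$ belong to the class $\mathcal{W}(\lambda^-,\lambda^+)$ (defined in the context), and let $X, Y \in \mathbb{R}^{N\times K}$ satisfy $Y = WX$. Write $X = \mathbf{1}\bar{X}^T + X_c$ and $Y = \mathbf{1}\bar{Y}^T + Y_c$, where $\mathbf{1} = [1,\dots,1]^T \in \mathbb{R}^N$ and $\bar{X}, \bar{Y} \in \mathbb{R}^K$ are the column averages, $\bar{X}_k = \frac1N\sum_{i=1}^N X_{ik}$, $\bar{Y}_k = \frac1N\sum_{i=1}^N Y_{ik}$. Then: (i) the matrices $X^TY$ and $X_c^TY_c$ are symmetric; (ii) the following hold: $$\bar{X} = \bar{Y},$$ $$\lambda^- X_c^TX_c \preceq X_c^TY_c \preceq \lambda^+ X_c^TX_c,$$ $$(Y_c - \lambda^- X_c)^T(Y_c - \lambda^+ X_c) \preceq 0,$$ where $A \preceq B$ means $B - A$ is positive semidefinite; (iii) the three constraints in (ii) are LMI Gram-representable, i.e. each can be expressed as a finite set of linear matrix inequality (or linear) constraints in the entries of the Gram matrix of the scalars/vectors $\{X_{ik}, Y_{ik}\}_{i,k}$.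
   Context: $\mathcal{W}(\lambda^-,\lambda^+)$ denotes the set of real symmetric $N\times N$ matrices $W$ that are generalized doubly stochastic (i.e. $\sum_{i=1}^N w_{ij} = 1$ for all $j$ and $\sum_{j=1}^N w_{ij}=1$ for all $i$, with no nonnegativity requirement on the entries), and whose eigenvalues, apart from the eigenvalue $\lambda_1 = 1$ (associated with the eigenvector $\mathbf{1}$), all lie in $[\lambda^-,\lambda^+]$: $\lambda^- \le \lambda_N \le \dots \le \lambda_2 \le \lambda^+$. In the application, $X_{ik} = x_i^k$ and $Y_{ik} = y_i^k$ are one-dimensional local variables of agent $i$ at consensus step $k$, and the consensus step is $y_i^k = \sum_j w_{ij} x_j^k$. A constraint is called linearly (resp. LMI) Gram-representable if it can be expressed using a finite set of linear (resp. linear matrix inequality) constraints involving (parts of) the Gram matrix $G = P^TP$ of the variables collected as columns of $P$ (and possibly a vector of function values). *)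

From HB Require Import structures.
From mathcomp Require Import all_boot all_order all_algebra.
From mathcomp Require Import reals.
Set Implicit Arguments. Unset Strict Implicit. Unset Printing Implicit Defensive.
Import Order.TTheory GRing.Theory Num.Theory.
Local Open Scope ring_scope.

Section Defs.
Variable R : realType.

Definition ones (N : nat) : 'cV[R]_N := const_mx 1.

Definition colavg (N K : nat) (X : 'M[R]_(N, K)) : 'cV[R]_K :=
  \col_k (N%:R^-1 * \sum_(i < N) X i k).

Definition centered (N K : nat) (X : 'M[R]_(N, K)) : 'M[R]_(N, K) :=
  X - ones N *m (colavg X)^T.

Definition psd (n : nat) (M : 'M[R]_n) : Prop :=
  M^T = M /\ forall v : 'cV[R]_n, 0 <= (v^T *m M *m v) ord0 ord0.

Definition loewner_le (n : nat) (A B : 'M[R]_n) : Prop := psd (B - A).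

Definition gen_doubly_stochastic (N : nat) (W : 'M[R]_N) : Prop :=
  (forall j, \sum_(i < N) W i j = 1) /\ (forall i, \sum_(j < N) W i j = 1).

(* W in the class W(lm, lp): real symmetric, generalized doubly stochastic,
   and the eigenvalues other than lambda_1 = 1 (i.e. the roots of the
   characteristic polynomial once one factor (X - 1) is removed) lie in
   [lm, lp]. *)
Definition in_class_W (lm lp : R) (N : nat) (W : 'M[R]_N) : Prop :=
  W^T = W /\ gen_doubly_stochastic W /\
  exists p : {poly R}, char_poly W = ('X - 1%:P) * p /\
    forall x : R, root p x -> lm <= x <= lp.

Definition var_vec (N K : nat) (X Y : 'M[R]_(N, K)) : 'rV[R]_(N * K + N * K) :=
  row_mx (mxvec X) (mxvec Y).

Definition gram (N K : nat) (X Y : 'M[R]_(N, K)) : 'M[R]_(N * K + N * K) :=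
  (var_vec X Y)^T *m var_vec X Y.

End Defs.

(* Since W is doubly stochastic, Y = W X gives Ybar = Xbar and Y_c = W X_c, and the
   columns of X_c sum to zero.  Each matrix inequality of (ii) then says that
   X_c^T q(W) X_c is positive semidefinite for a polynomial q that is nonnegative on
   [lm, lp]: q = X - lm, lp - X and (X - lm)(lp - X).  Diagonalizing W = P* D P with P
   unitary, u q(W) u^T is the sum of q(d_j) |(u P* )_j|^2.  All the q(d_j) are
   nonnegative except possibly at the eigenvalue 1 split off the characteristic
   polynomial; if q(1) < 0, then 1 is not a root of the remaining factor, so it is a
   simple eigenvalue with eigenvector 1, and the corresponding coordinate of u vanishes
   when u is orthogonal to 1.
   For (iii), every entry of X_c and Y_c is a fixed linear form in the vector of all
   the X_ik, Y_ik, so every entry of X_c^T Y_c, X_c^T X_c, ... is the trace of a fixed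
   matrix against the Gram matrix. *)

From HB Require Import structures.
From mathcomp Require Import all_boot all_order all_algebra.
From mathcomp Require Import reals complex.
Import Order.TTheory GRing.Theory Num.Theory Num.Def.

Set Implicit Arguments.
Unset Strict Implicit.
Unset Printing Implicit Defensive.

Local Open Scope ring_scope.

Lemma char_poly_similar (F : fieldType) n (P A : 'M[F]_n) :
  P \in unitmx -> char_poly (invmx P *m A *m P) = char_poly A.
Proof.
move=> Pu; rewrite /char_poly /char_poly_mx.
set P' := map_mx polyC P; set Q' := map_mx polyC (invmx P).
have QP : Q' *m P' = 1%:M by rewrite -map_mxM mulVmx // map_mx1.
have -> : map_mx polyC (invmx P *m A *m P) = Q' *m map_mx polyC A *m P'.
  by rewrite !map_mxM.
have {1}-> : ('X%:M : 'M[{poly F}]_n) = Q' *m 'X%:M *m P'.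
  by rewrite -mulmxA -scalar_mxC mulmxA QP mul1mx.
rewrite -mulmxBl -mulmxBr !det_mulmx mulrC mulrA -det_mulmx.
have QP1 : \det (P' *m Q') = 1 by rewrite det_mulmx mulrC -det_mulmx QP det1.
by rewrite QP1 mul1r.
Qed.

Section UnitaryDiagonalization.
Local Open Scope sesquilinear_scope.
Variables (C : numClosedFieldType) (n : nat) (P : 'M[C]_n) (d : 'rV[C]_n).
Hypothesis P_unitary : P \is unitarymx.

Lemma unitary_trC_mulmx : P^t* *m P = 1%:M.
Proof.
have : P^t* \is unitarymx by rewrite trmxC_unitary.
by move/unitarymxP; rewrite trmxCK.
Qed.

Lemma form_diag_unitary_conj (e v : 'rV[C]_n) :
  (v *m (P^t* *m diag_mx e *m P) *m v^t*) 0 0 =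
  \sum_j e 0 j * ((v *m P^t*) 0 j * ((v *m P^t*) 0 j)^*).
Proof.
set z := v *m P^t*.
have zC : P *m v^t* = z^t* by rewrite trmx_mul map_mxM trmxCK.
rewrite !mulmxA -/z -(mulmxA _ P) zC mxE; apply: eq_bigr => j _.
by rewrite mul_mx_diag !mxE mulrAC mulrC.
Qed.

Lemma dotmx_unitary_conj (v w : 'rV[C]_n) :
  (v *m P^t*) *m (w *m P^t*)^t* = v *m w^t*.
Proof.
by rewrite trmx_mul map_mxM trmxCK mulmxA -(mulmxA v) unitary_trC_mulmx mulmx1.
Qed.

Lemma eigen_coord_unitary_diag (w : 'rV[C]_n) a k :
  w *m (P^t* *m diag_mx d *m P) = a *: w ->
  (w *m P^t*) 0 k * d 0 k = a * (w *m P^t*) 0 k.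
Proof.
move=> wA; have AP : P^t* *m diag_mx d *m P *m P^t* = P^t* *m diag_mx d.
  by rewrite -mulmxA (unitarymxP P_unitary) mulmx1.
have : w *m P^t* *m diag_mx d = a *: (w *m P^t*).
  by rewrite -mulmxA -AP mulmxA wA scalemxAl.
by move/matrixP/(_ 0 k); rewrite mul_mx_diag !mxE.
Qed.

Lemma coord_orthogonal_simple_eigen (w v : 'rV[C]_n) j0 :
  w *m (P^t* *m diag_mx d *m P) = w -> w != 0 ->
  (forall k, k != j0 -> d 0 k != 1) -> v *m w^t* = 0 ->
  (v *m P^t*) 0 j0 = 0.
Proof.
move=> wA w_neq0 simple vw; set z := v *m P^t*; set c := w *m P^t*.
have zc : z *m c^t* = 0 by rewrite dotmx_unitary_conj.
have c_supp k : k != j0 -> c 0 k = 0.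
  move=> /simple dk1; apply/eqP.
  have wA1 : w *m (P^t* *m diag_mx d *m P) = 1 *: w by rewrite scale1r.
  move: (@eigen_coord_unitary_diag w 1 k wA1); rewrite mul1r => /eqP.
  rewrite -subr_eq0 -{2}[c 0 k]mulr1 -mulrBr.
  by rewrite mulf_eq0 subr_eq0 (negbTE dk1) orbF.
have cj0 : c 0 j0 != 0.
  apply: contraNneq w_neq0 => cj0; rewrite -[w]mulmx1 -unitary_trC_mulmx mulmxA -/c.
  suff -> : c = 0 by rewrite mul0mx.
  by apply/rowP => k; rewrite [RHS]mxE; case: (eqVneq k j0) => [->|/c_supp].
clearbody z c; move/matrixP/(_ 0 0): zc; rewrite !mxE (bigD1 j0) //= big1 ?addr0.
  by rewrite !mxE => /eqP; rewrite mulf_eq0 conjC_eq0 (negbTE cj0) orbF => /eqP.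
by move=> k /c_supp ck0; rewrite !mxE ck0 conjC0 mulr0.
Qed.

End UnitaryDiagonalization.

Section RealMatrices.
Variable R : realType.

Lemma trmx_ones_mul (m k : nat) (A : 'M[R]_(m, k)) :
  (forall j, \sum_i A i j = 1) -> (ones R m)^T *m A = (ones R k)^T.
Proof.
move=> A_col; apply/rowP => j; rewrite !mxE -(A_col j).
by apply: eq_bigr => i _; rewrite !mxE mul1r.
Qed.

Lemma mul_ones (m k : nat) (A : 'M[R]_(m, k)) :
  (forall i, \sum_j A i j = 1) -> A *m ones R k = ones R m.
Proof.
move=> A_row; apply/colP => i; rewrite !mxE -(A_row i).
by apply: eq_bigr => j _; rewrite !mxE mulr1.
Qed.

Lemma mul_ones_sum (m k : nat) (A : 'M[R]_(m, k)) i :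
  (A *m ones R k) i 0 = \sum_j A i j.
Proof. by rewrite mxE; apply: eq_bigr => j _; rewrite mxE mulr1. Qed.

Lemma centeredE m k (X : 'M[R]_(m, k)) i j :
  centered X i j = X i j - m%:R^-1 * \sum_l X l j.
Proof. by rewrite !mxE big_ord1 !mxE mul1r. Qed.

Lemma colavgE m k (X : 'M[R]_(m, k)) : colavg X = m%:R^-1 *: (X^T *m ones R m).
Proof.
apply/colP => j; rewrite [LHS]mxE [RHS]mxE mul_ones_sum; congr (_ * _).
by apply: eq_bigr => i _; rewrite mxE.
Qed.

Lemma colavg_mul m k (W : 'M[R]_m) (X : 'M[R]_(m, k)) :
  (forall j, \sum_i W i j = 1) -> colavg (W *m X) = colavg X.
Proof.
move=> W_col; have WT1 : W^T *m ones R m = ones R m.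
  by apply: trmx_inj; rewrite trmx_mul trmxK trmx_ones_mul.
by rewrite !colavgE trmx_mul -mulmxA WT1.
Qed.

Lemma centered_mul m k (W : 'M[R]_m) (X : 'M[R]_(m, k)) :
  (forall j, \sum_i W i j = 1) -> (forall i, \sum_j W i j = 1) ->
  centered (W *m X) = W *m centered X.
Proof.
by move=> W_col W_row; rewrite /centered colavg_mul // mulmxBr mulmxA mul_ones.
Qed.

Lemma centered_colsum m k (X : 'M[R]_(m, k)) j :
  (0 < m)%N -> \sum_i centered X i j = 0.
Proof.
move=> m_gt0; under eq_bigr do rewrite centeredE.
rewrite sumrB sumr_const card_ord -(mulr_natl (m%:R^-1 * _)) mulrA.
rewrite mulfV ?mul1r ?subrr //.
by rewrite pnatr_eq0 -lt0n.
Qed.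

Lemma colavg_eqP m k (X Y : 'M[R]_(m, k)) :
  colavg X = colavg Y <-> forall j, \sum_i (X i j - Y i j) = 0.
Proof.
case: m X Y => [|m] X Y.
  by split=> [_ j|_]; [rewrite big_ord0 | apply/colP => j; rewrite !mxE !big_ord0].
have m_neq0 : (m.+1%:R^-1 : R) != 0 by rewrite invr_eq0 pnatr_eq0.
split=> [/colP XY j | XY].
  by move: (XY j); rewrite !mxE sumrB => /(mulfI m_neq0) ->; rewrite subrr.
apply/colP => j; move/eqP: (XY j); rewrite sumrB subr_eq0 => /eqP XYj.
by rewrite !mxE XYj.
Qed.

Lemma trmx_sym_form m k (Z : 'M[R]_(m, k)) (V : 'M[R]_m) :
  V^T = V -> (Z^T *m V *m Z)^T = Z^T *m V *m Z.
Proof. by move=> V_sym; rewrite !trmx_mul trmxK V_sym mulmxA. Qed.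

Lemma psd_centered_form m k (Z : 'M[R]_(m, k)) (V : 'M[R]_m) :
  (forall j, \sum_i Z i j = 0) -> V^T = V ->
  (forall u : 'rV_m, \sum_i u 0 i = 0 -> 0 <= (u *m V *m u^T) 0 0) ->
  psd (Z^T *m V *m Z).
Proof.
move=> Z_sum V_sym V_ge0; split; first exact: trmx_sym_form.
move=> v; set u := (Z *m v)^T.
have -> : v^T *m (Z^T *m V *m Z) *m v = u *m V *m u^T.
  by rewrite /u trmxK trmx_mul !mulmxA.
apply: V_ge0; rewrite /u; under eq_bigr do rewrite !mxE.
by rewrite exchange_big /= big1 // => j _; rewrite -mulr_suml Z_sum mul0r.
Qed.

End RealMatrices.

(* MathComp's spectral theorem is stated for hermitian matrices over a
   numClosedFieldType, so a real symmetric W is diagonalized over R[i]. *)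
Section RealSymmetricSpectral.
Local Open Scope sesquilinear_scope.
Variables (R : realType) (n : nat) (W : 'M[R]_n.+1).
Hypothesis W_sym : W^T = W.

Local Notation toC := (real_complex R).
Local Notation Wc := (map_mx toC W).
Let P := spectralmx Wc.
Let d := spectral_diag Wc.

Lemma conj_map_real m1 m2 (A : 'M[R]_(m1, m2)) :
  map_mx conjC (map_mx toC A) = map_mx toC A.
Proof. by apply/matrixP => i j; rewrite !mxE conj_Creal // complex_real. Qed.

Lemma map_real_sym_hermsym : Wc \is hermsymmx.
Proof.
by apply/is_hermitianmxP; rewrite expr0 scale1r map_trmx W_sym conj_map_real.
Qed.

Lemma real_sym_spectral : Wc = P^t* *m diag_mx d *m P.
Proof.
rewrite -invmx_unitary ?spectral_unitarymx //.
exact/orthomx_spectralP/hermitian_normalmx/map_real_sym_hermsym.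
Qed.

Lemma real_sym_spectral_diag_real j : toC (complex.Re (d 0 j)) = d 0 j.
Proof.
apply: RRe_real.
by move/mxOverP: (hermitian_spectral_diag_real map_real_sym_hermsym); apply.
Qed.

Lemma map_horner_mx_real_sym (r : {poly R}) :
  map_mx toC (horner_mx W r) =
  P^t* *m diag_mx (map_mx (horner (map_poly toC r)) d) *m P.
Proof.
rewrite map_horner_mx real_sym_spectral -invmx_unitary ?spectral_unitarymx //.
by rewrite horner_mx_uconjC ?spectral_unit // horner_mx_diag.
Qed.

Lemma real_sym_spectral_roots (p : {poly R}) :
  char_poly W = ('X - 1%:P) * p ->
  exists2 j0, d 0 j0 = 1 & forall j, j != j0 -> root p (complex.Re (d 0 j)).
Proof.
move=> Wchar.
have charE : ('X - 1%:P) * map_poly toC p = \prod_j ('X - (d 0 j)%:P).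
  rewrite -map_polyXsubC rmorph1 -rmorphM /= -Wchar map_char_poly.
  rewrite real_sym_spectral -invmx_unitary ?spectral_unitarymx //.
  rewrite char_poly_similar ?spectral_unit // char_poly_trig ?diag_mx_is_trig //.
  by apply: eq_bigr => j _; rewrite mxE eqxx mulr1n.
have [j0 _ dj0] : exists2 j0, true & d 0 j0 = 1.
  have : root (\prod_j ('X - (d 0 j)%:P)) 1 by rewrite -charE rootM root_XsubC eqxx.
  rewrite /root horner_prod => /prodf_eq0 [j _].
  by rewrite hornerXsubC subr_eq0 => /eqP dj; exists j.
exists j0 => // j jj0; rewrite -(fmorph_root toC) /= real_sym_spectral_diag_real.
have -> : map_poly toC p = \prod_(k | k != j0) ('X - (d 0 k)%:P).
  apply: (@mulfI _ ('X - 1%:P)); first by rewrite polyXsubC_eq0.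
  by rewrite charE (bigD1 j0) //= dj0.
by rewrite /root horner_prod; apply/prodf_eq0; exists j => //; rewrite hornerXsubC subrr.
Qed.

Lemma form_horner_mx_real_sym (r : {poly R}) (u : 'rV[R]_n.+1) :
  toC ((u *m horner_mx W r *m u^T) 0 0) =
  \sum_j (map_poly toC r).[d 0 j] *
          ((map_mx toC u *m P^t*) 0 j * ((map_mx toC u *m P^t*) 0 j)^*).
Proof.
have uT : map_mx toC u^T = (map_mx toC u)^t* by rewrite map_trmx conj_map_real.
set M := u *m horner_mx W r *m u^T.
have -> : toC (M 0 0) = map_mx toC M 0 0 by rewrite [RHS]mxE.
rewrite /M !map_mxM map_horner_mx_real_sym uT form_diag_unitary_conj.
by apply: eq_bigr => j _; rewrite mxE.
Qed.

Lemma orth_ones_coord_real_sym (u : 'rV[R]_n.+1) j0 :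
  (forall j, \sum_i W i j = 1) -> (forall k, k != j0 -> d 0 k != 1) ->
  \sum_i u 0 i = 0 -> (map_mx toC u *m P^t*) 0 j0 = 0.
Proof.
move=> W_col simple u_sum; set w := map_mx toC (ones R n.+1)^T.
have P_unitary : P \is unitarymx := spectral_unitarymx Wc.
apply: (coord_orthogonal_simple_eigen P_unitary (d := d) (w := w)) => //.
- by rewrite -real_sym_spectral -map_mxM trmx_ones_mul.
- by apply/eqP => /rowP /(_ 0); rewrite !mxE rmorph1 => /eqP; rewrite oner_eq0.
- rewrite map_trmx conj_map_real trmxK -map_mxM; apply/rowP => i.
  by rewrite ord1 [LHS]mxE mul_ones_sum u_sum rmorph0 mxE.
Qed.

Lemma horner_form_ge0_orth_ones (p r : {poly R}) :
  (forall j, \sum_i W i j = 1) -> char_poly W = ('X - 1%:P) * p ->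
  (forall x, root p x -> 0 <= r.[x]) ->
  forall u : 'rV[R]_n.+1, \sum_i u 0 i = 0 -> 0 <= (u *m horner_mx W r *m u^T) 0 0.
Proof.
move=> W_col W_char r_ge0 u u_sum.
have [j0 dj0 root_d] := real_sym_spectral_roots W_char.
have e_ge0 j : j != j0 -> 0 <= (map_poly toC r).[d 0 j].
  by move=> /root_d /r_ge0; rewrite -real_sym_spectral_diag_real horner_map ler0c.
rewrite -ler0c form_horner_mx_real_sym; apply: sumr_ge0 => j _.
set z := (map_mx toC u *m P^t*) 0 j.
have zz_ge0 : 0 <= z * z^* by apply: mul_conjC_ge0.
have [j_j0|/e_ge0 ej_ge0] := eqVneq j j0; last exact: mulr_ge0.
have [r1_ge0|r1_lt0] := lerP 0 r.[1].
  by rewrite j_j0 dj0 -(rmorph1 toC) horner_map mulr_ge0 ?ler0c.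
suff -> : z = 0 by rewrite mul0r mulr0.
rewrite /z j_j0; apply: orth_ones_coord_real_sym => // k kj0.
apply: contraTneq r1_lt0 => dk1.
have := root_d k kj0; rewrite dk1 -(rmorph1 toC) /= => p_root1.
by rewrite -leNgt r_ge0.
Qed.

End RealSymmetricSpectral.

Section ConsensusConstraints.
Variables (R : realType) (n k : nat) (W : 'M[R]_n.+1) (p : {poly R}) (lm lp : R).
Hypotheses (W_sym : W^T = W) (W_col : forall j, \sum_i W i j = 1).
Hypothesis W_char : char_poly W = ('X - 1%:P) * p.
Hypothesis W_roots : forall x, root p x -> lm <= x <= lp.
Variable Z : 'M[R]_(n.+1, k).
Hypothesis Z_sum : forall j, \sum_i Z i j = 0.

Lemma horner_mx_sym (r : {poly R}) : (horner_mx W r)^T = horner_mx W r.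
Proof.
elim/poly_ind: r => [|r c IH]; first by rewrite rmorph0 trmx0.
rewrite rmorphD rmorphM /= horner_mx_X horner_mx_C linearD /= tr_scalar_mx.
rewrite [_ * W]/(_ *m W) trmx_mul IH W_sym; congr (_ + _).
exact/esym/comm_horner_mx.
Qed.

Lemma horner_mx_XsubC c : horner_mx W ('X - c%:P) = W - c%:M.
Proof. by rewrite rmorphB /= horner_mx_X horner_mx_C. Qed.

Lemma psd_horner_centered (r : {poly R}) :
  (forall x, lm <= x <= lp -> 0 <= r.[x]) -> psd (Z^T *m horner_mx W r *m Z).
Proof.
move=> r_ge0; apply: psd_centered_form Z_sum _ _; first exact: horner_mx_sym.
by apply: (horner_form_ge0_orth_ones W_sym W_col W_char) => x /W_roots /r_ge0.
Qed.

Lemma loewner_le_lower : loewner_le (lm *: (Z^T *m Z)) (Z^T *m (W *m Z)).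
Proof.
rewrite /loewner_le.
have -> : Z^T *m (W *m Z) - lm *: (Z^T *m Z) = Z^T *m horner_mx W ('X - lm%:P) *m Z.
  by rewrite horner_mx_XsubC mulmxBr mulmxBl mul_mx_scalar -scalemxAl mulmxA.
by apply: psd_horner_centered => x /andP[lm_x _]; rewrite hornerXsubC subr_ge0.
Qed.

Lemma loewner_le_upper : loewner_le (Z^T *m (W *m Z)) (lp *: (Z^T *m Z)).
Proof.
rewrite /loewner_le.
have -> : lp *: (Z^T *m Z) - Z^T *m (W *m Z) = Z^T *m horner_mx W (lp%:P - 'X) *m Z.
  rewrite rmorphB /= horner_mx_X horner_mx_C.
  by rewrite mulmxBr mulmxBl mul_mx_scalar -scalemxAl mulmxA.
by apply: psd_horner_centered => x /andP[_ x_lp]; rewrite !hornerE subr_ge0.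
Qed.

Lemma loewner_le_quadratic :
  loewner_le ((W *m Z - lm *: Z)^T *m (W *m Z - lp *: Z)) 0.
Proof.
have XsubC_mul c : W *m Z - c *: Z = horner_mx W ('X - c%:P) *m Z.
  by rewrite horner_mx_XsubC mulmxBl mul_scalar_mx.
rewrite /loewner_le sub0r !XsubC_mul trmx_mul horner_mx_sym.
rewrite (_ : - _ = Z^T *m horner_mx W (('X - lm%:P) * (lp%:P - 'X)) *m Z); last first.
  rewrite -[lp%:P - 'X]opprB mulrN rmorphN rmorphM [_ * _]/(_ *m _).
  by rewrite mulmxN mulNmx !mulmxA.
apply: psd_horner_centered => x /andP[lm_x x_lp].
by rewrite !hornerE mulr_ge0 ?subr_ge0.
Qed.

End ConsensusConstraints.

Section GramRepresentation.
Variables (R : realType) (N K : nat).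
Local Notation n2 := (N * K + N * K)%N.
Implicit Types (X Y : 'M[R]_(N, K)) (a b : 'I_N -> 'I_K -> 'cV[R]_n2).

Definition coef_x i k : 'cV[R]_n2 := delta_mx (lshift _ (mxvec_index i k)) 0.
Definition coef_y i k : 'cV[R]_n2 := delta_mx (rshift _ (mxvec_index i k)) 0.

Definition eval_coef a X Y : 'M[R]_(N, K) :=
  \matrix_(i, k) \tr (var_vec X Y *m a i k).

Lemma eval_coefE a X Y i k : eval_coef a X Y i k = \tr (var_vec X Y *m a i k).
Proof. by rewrite mxE. Qed.

Lemma eval_coef_x X Y : eval_coef coef_x X Y = X.
Proof.
by apply/matrixP => i k; rewrite eval_coefE trace_mx11 -colE mxE row_mxEl mxvecE.
Qed.

Lemma eval_coef_y X Y : eval_coef coef_y X Y = Y.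
Proof.
by apply/matrixP => i k; rewrite eval_coefE trace_mx11 -colE mxE row_mxEr mxvecE.
Qed.

Lemma eval_coef_subZ a b c X Y :
  eval_coef (fun i k => a i k - c *: b i k) X Y =
  eval_coef a X Y - c *: eval_coef b X Y.
Proof.
apply/matrixP => i k; rewrite eval_coefE !mxE.
by rewrite mulmxBr linearB /= -scalemxAr mxtraceZ.
Qed.

Definition center_coef a i k := a i k - N%:R^-1 *: \sum_j a j k.

Lemma eval_center_coef a X Y :
  eval_coef (center_coef a) X Y = centered (eval_coef a X Y).
Proof.
apply/matrixP => i k; rewrite centeredE !eval_coefE.
rewrite mulmxBr linearB /= -scalemxAr mxtraceZ.
by rewrite mulmx_sumr linear_sum; under [in RHS]eq_bigr do rewrite eval_coefE.
Qed.

Lemma tr_rank1_gram (u w : 'cV[R]_n2) X Y :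
  \tr (u *m w^T *m gram X Y) = \tr (var_vec X Y *m u) * \tr (var_vec X Y *m w).
Proof.
rewrite /gram !mulmxA mxtrace_mulC !mulmxA -mulmxA -trmx_mul !trace_mx11.
by move: (var_vec X Y *m u) (var_vec X Y *m w) => a b; rewrite mxE big_ord1 mxE.
Qed.

Definition cross_coef a b k l := \sum_i a i k *m (b i l)^T.

Lemma gram_cross_coef a b X Y :
  \matrix_(k, l) \tr (cross_coef a b k l *m gram X Y) =
  (eval_coef a X Y)^T *m eval_coef b X Y.
Proof.
apply/matrixP => k l; rewrite !mxE mulmx_suml linear_sum /=; apply: eq_bigr => i _.
by rewrite tr_rank1_gram mxE !eval_coefE.
Qed.

Lemma gram_opp_cross_coef a b X Y :
  \matrix_(k, l) \tr ((- cross_coef a b k l) *m gram X Y) =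
  - ((eval_coef a X Y)^T *m eval_coef b X Y).
Proof.
rewrite -gram_cross_coef; apply/matrixP => k l.
by rewrite !mxE mulNmx linearN.
Qed.

Lemma gram_representation (lm lp : R) :
  exists (A : 'I_K -> 'M[R]_(N * K + N * K))
          (B1 B2 C : 'I_K -> 'I_K -> 'M[R]_(N * K + N * K)),
     forall X' Y' : 'M[R]_(N, K),
       let G := gram X' Y' in
       let Xc' := centered X' in let Yc' := centered Y' in
       (colavg X' = colavg Y' <-> forall k, \tr (A k *m G) = 0) /\
       (loewner_le (lm *: (Xc'^T *m Xc')) (Xc'^T *m Yc') <->
          psd (\matrix_(k, l) \tr (B1 k l *m G))) /\
       (loewner_le (Xc'^T *m Yc') (lp *: (Xc'^T *m Xc')) <->
          psd (\matrix_(k, l) \tr (B2 k l *m G))) /\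
       (loewner_le ((Yc' - lm *: Xc')^T *m (Yc' - lp *: Xc')) 0 <->
          psd (\matrix_(k, l) \tr (C k l *m G))).
Proof.
pose s k := \sum_i (coef_x i k - coef_y i k).
pose cx := center_coef coef_x; pose cy := center_coef coef_y.
pose cy_sub c i k := cy i k - c *: cx i k.
exists (fun k => s k *m (s k)^T).
exists (fun k l => cross_coef cx (cy_sub lm) k l).
exists (fun k l => - cross_coef cx (cy_sub lp) k l).
exists (fun k l => - cross_coef (cy_sub lm) (cy_sub lp) k l).
move=> X Y G Xc Yc.
have Yc_sub c : eval_coef (cy_sub c) X Y = Yc - c *: Xc.
  by rewrite eval_coef_subZ !eval_center_coef eval_coef_x eval_coef_y.
have Xc_eval : eval_coef cx X Y = Xc by rewrite eval_center_coef eval_coef_x.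
rewrite /G; clearbody Xc Yc.
rewrite /loewner_le gram_cross_coef !gram_opp_cross_coef !Yc_sub Xc_eval.
split; last split; last split.
- have s_eval k : \tr (var_vec X Y *m s k) = \sum_i (X i k - Y i k).
    rewrite mulmx_sumr linear_sum /=; apply: eq_bigr => i _.
    by rewrite mulmxBr linearB /= -!eval_coefE eval_coef_x eval_coef_y.
  rewrite colavg_eqP; split=> XY k; move: (XY k); rewrite tr_rank1_gram s_eval.
    by move->; rewrite mulr0.
  by move/eqP; rewrite mulf_eq0 orbb => /eqP.
- by rewrite scalemxAr -mulmxBr.
- by rewrite scalemxAr -mulmxBr -mulmxN opprB.
- by rewrite sub0r.
Qed.

End GramRepresentation.

Theorem theorem2 (R : realType) (N K : nat) (lm lp : R) :
  (0 < N)%N -> (0 < K)%N ->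
  -1 <= lm <= 1 -> -1 <= lp <= 1 ->
  forall (W : 'M[R]_N) (X Y : 'M[R]_(N, K)),
  in_class_W lm lp W -> Y = W *m X ->
  let Xc := centered X in let Yc := centered Y in
  (* (i) symmetry *)
  ((X^T *m Y)^T = X^T *m Y /\ (Xc^T *m Yc)^T = Xc^T *m Yc) /\
  (* (ii) the three constraints *)
  (colavg X = colavg Y /\
   loewner_le (lm *: (Xc^T *m Xc)) (Xc^T *m Yc) /\
   loewner_le (Xc^T *m Yc) (lp *: (Xc^T *m Xc)) /\
   loewner_le ((Yc - lm *: Xc)^T *m (Yc - lp *: Xc)) 0) /\
  (* (iii) LMI Gram-representability: there are fixed coefficient matrices
     (independent of X, Y) such that each constraint is equivalent to linear
     / linear-matrix-inequality constraints on the Gram matrix G of the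
     scalars {X_ik, Y_ik} *)
  (exists (A : 'I_K -> 'M[R]_(N * K + N * K))
          (B1 B2 C : 'I_K -> 'I_K -> 'M[R]_(N * K + N * K)),
     forall X' Y' : 'M[R]_(N, K),
       let G := gram X' Y' in
       let Xc' := centered X' in let Yc' := centered Y' in
       (colavg X' = colavg Y' <-> forall k, \tr (A k *m G) = 0) /\
       (loewner_le (lm *: (Xc'^T *m Xc')) (Xc'^T *m Yc') <->
          psd (\matrix_(k, l) \tr (B1 k l *m G))) /\
       (loewner_le (Xc'^T *m Yc') (lp *: (Xc'^T *m Xc')) <->
          psd (\matrix_(k, l) \tr (B2 k l *m G))) /\
       (loewner_le ((Yc' - lm *: Xc')^T *m (Yc' - lp *: Xc')) 0 <->
          psd (\matrix_(k, l) \tr (C k l *m G)))).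
Proof.
case: N => [//|n] _ _ _ _ W X Y [W_sym [[W_col W_row] [p [W_char W_roots]]]] Y_def Xc Yc.
have Yc_def : Yc = W *m Xc by rewrite /Yc /Xc Y_def centered_mul.
have Xc_sum j : \sum_i Xc i j = 0 by apply: centered_colsum.
split; [|split; last exact: gram_representation].
  by rewrite Yc_def Y_def !mulmxA; split; apply: trmx_sym_form.
split; first by rewrite Y_def colavg_mul.
rewrite Yc_def; split; [|split].
- exact: (loewner_le_lower W_sym W_col W_char W_roots Xc_sum).
- exact: (loewner_le_upper W_sym W_col W_char W_roots Xc_sum).
- exact: (loewner_le_quadratic W_sym W_col W_char W_roots Xc_sum).
Qed.
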